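(* Let $S=(s_{ij})$ and $C=(c_{ij})$ be real $n\times n$ matrices with spectra (counted with multiplicities) $\sigma(S)=(\lambda_1,\ldots,\lambda_n)$ and $\sigma(C)=(\mu_1,\ldots,\mu_n)$, and let $0\le\gamma\le 1$. Suppose $|c_{ij}|\le s_{ij}$ for all $1\le i,j\le n$ (equivalently, $S$, $S+C$ and $S-C$ are entrywise nonnegative). Then $\tfrac12(S+\gamma C)$ and $\tfrac12(S-\gamma C)$ are nonnegative, and the $2n\times 2n$ block matrices $M_{\pm\gamma}=(M_{ij,\pm\gamma})_{i,j=1}^n$ with $$M_{ij,\pm\gamma}=\begin{pmatrix}\frac{s_{ij}\pm\gamma c_{ij}}{2} & \frac{s_{ij}\mp\gamma c_{ij}}{2}\\ \frac{s_{ij}\mp\gamma c_{ij}}{2} & \frac{s_{ij}\pm\gamma c_{ij}}{2}\end{pmatrix}$$ are nonnegative and realize, respectively, the lists $(\lambda_1,\ldots,\lambda_n,\gamma\mu_1,\ldots,\gamma\mu_n)$ (for $M_{+\gamma}$) and $(\lambda_1,\ldots,\lambda_n,-\gamma\mu_1,\ldots,-\gamma\mu_n)$ (for $M_{-\gamma}$).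
   Context: A matrix realizes a list of complex numbers if the list is its spectrum counted with multiplicities. Nonnegative means entrywise nonnegative. *)

From HB Require Import structures.
From mathcomp Require Import all_boot all_order all_algebra.
From mathcomp Require Import complex.
From mathcomp Require Import reals.
Set Implicit Arguments. Unset Strict Implicit. Unset Printing Implicit Defensive.
Import Order.TTheory GRing.Theory Num.Theory.
Local Open Scope ring_scope.
Local Open Scope complex_scope.

Definition nonneg_mx (R : numDomainType) m n (A : 'M[R]_(m, n)) : Prop :=
  forall i j, 0 <= A i j.

(* A real square matrix realizes a list of complex numbers iff the list is its
   spectrum counted with multiplicities, i.e. the characteristic polynomial of
   the matrix (viewed over R[i]) is  prod_{z in l} (X - z). *)
Definition realizes (R : rcfType) n (A : 'M[R]_n) (l : seq R[i]) : Prop :=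
  char_poly (map_mx (fun x : R => x%:C) A) = \prod_(z <- l) ('X - z%:P).

Lemma block_idx_proof n (r : 'I_(n * 2)) : (r %/ 2 < n)%N.
Proof. by rewrite ltn_divLR // ltn_ord. Qed.

Definition block_idx n (r : 'I_(n * 2)) : 'I_n := Ordinal (block_idx_proof r).

(* block_mx2 S C g : the 2n x 2n matrix with (i,j) 2x2 block
     [ (s_ij + g c_ij)/2   (s_ij - g c_ij)/2 ]
     [ (s_ij - g c_ij)/2   (s_ij + g c_ij)/2 ],
   rows/columns ordered (1,1),(1,2),(2,1),(2,2),...,(n,1),(n,2).
   M_{+gamma} = block_mx2 S C gamma,  M_{-gamma} = block_mx2 S C (- gamma). *)
Definition block_mx2 (R : fieldType) n (S C : 'M[R]_n) (g : R) : 'M[R]_(n * 2) :=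
  \matrix_(r, c)
    if (r %% 2 == c %% 2)%N
    then (S (block_idx r) (block_idx c) + g * C (block_idx r) (block_idx c)) / 2
    else (S (block_idx r) (block_idx c) - g * C (block_idx r) (block_idx c)) / 2.

From HB Require Import structures.
From mathcomp Require Import all_boot all_order all_algebra.
From mathcomp Require Import complex.
From mathcomp Require Import reals.
From mathcomp Require Import zify ring lra.
Import Order.TTheory GRing.Theory Num.Theory.
Set Implicit Arguments. Unset Strict Implicit. Unset Printing Implicit Defensive.
Local Open Scope ring_scope.

(* P = [I ⊗ (1, 1)^T | I ⊗ (1, -1)^T] satisfies P^T P = 2 I and
   block_mx2 S C g * P = P * diag(S, g C): on vectors (x_i, x_i)_i the matrix
   acts as S, on vectors (x_i, -x_i)_i as g C.  Hence the characteristic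
   polynomial of block_mx2 S C g is char_poly S * char_poly (g C), whose roots
   are the lambda_i and the g mu_i.  The entries (s_ij +- g c_ij) / 2 are
   nonnegative because |g c_ij| <= |c_ij| <= s_ij. *)

Lemma block_ord_proof n (i : 'I_n) (a : 'I_2) : (i * 2 + a < n * 2)%N.
Proof. by have := ltn_ord i; have := ltn_ord a; lia. Qed.

Definition block_ord n (i : 'I_n) (a : 'I_2) : 'I_(n * 2) :=
  Ordinal (block_ord_proof i a).

Lemma block_idx_ord n (i : 'I_n) a : block_idx (block_ord i a) = i.
Proof. by apply: val_inj; rewrite /= divnMDl // divn_small ?addn0. Qed.

Lemma block_ord_mod2 n (i : 'I_n) (a : 'I_2) : (block_ord i a %% 2 = a)%N.
Proof. by rewrite /= modnMDl modn_small. Qed.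

Lemma big_ord_mul2 (V : nmodType) n (F : 'I_(n * 2) -> V) :
  \sum_r F r = \sum_(i < n) (F (block_ord i ord0) + F (block_ord i ord_max)).
Proof.
pose G r := if insub r is Some k then F k else 0.
have GE (k : 'I_(n * 2)) : G k = F k by rewrite /G valK.
rewrite (eq_bigr (G \o val)); last by move=> k _; rewrite /= GE.
rewrite -(big_mkord xpredT G) big_nat_mul big_mkord; apply: eq_bigr => i _.
rewrite mulSnr addn2 big_ltn // big_ltn // big_geq // /= addr0 -!GE /=.
by rewrite addn0 addn1.
Qed.

Definition kron_idcol (R : pzRingType) n (a b : R) : 'M[R]_(n * 2, n) :=
  \matrix_(r, k) ((block_idx r == k)%:R * (if (r %% 2 == 0)%N then a else b)).

Section KronIdcol.
Variables (R : comPzRingType) (n : nat).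

Lemma mulmx_kron_idcol (M : 'M[R]_(n * 2)) (a b : R) :
  M *m kron_idcol n a b =
  \matrix_(r, j) (M r (block_ord j ord0) * a + M r (block_ord j ord_max) * b).
Proof.
apply/matrixP => r j; rewrite !mxE big_ord_mul2 (bigD1 j) //= big1 => [|i ij].
  by rewrite !mxE !block_idx_ord !block_ord_mod2 eqxx !mul1r addr0.
by rewrite !mxE !block_idx_ord (negbTE ij) !mul0r !mulr0 addr0.
Qed.

Lemma kron_idcol_mul (X : 'M[R]_n) (a b : R) :
  kron_idcol n a b *m X =
  \matrix_(r, j) ((if (r %% 2 == 0)%N then a else b) * X (block_idx r) j).
Proof.
apply/matrixP => r j; rewrite !mxE (bigD1 (block_idx r)) //= big1 => [|i ri].
  by rewrite !mxE eqxx mul1r addr0.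
by rewrite !mxE eq_sym (negbTE ri) !mul0r.
Qed.

Lemma tr_kron_idcol_mul (a b c d : R) :
  (kron_idcol n a b)^T *m kron_idcol n c d = (a * c + b * d)%:M.
Proof.
apply/matrixP => j k; rewrite !mxE big_ord_mul2 (bigD1 j) //= big1 => [|i ij].
  rewrite !mxE !block_idx_ord !block_ord_mod2 eqxx !mul1r addr0.
  by case: (j == k); rewrite /= ?mul1r ?mul0r ?mulr0 ?addr0.
by rewrite !mxE !block_idx_ord (negbTE ij) !mul0r addr0.
Qed.

End KronIdcol.

Section CharPoly.
Variable F : fieldType.

Lemma char_poly_similar m k (e : k = m) (M : 'M[F]_m) (P : 'M[F]_(m, k))
    (Q : 'M[F]_(k, m)) (D : 'M[F]_k) :
  Q *m P = 1%:M -> M *m P = P *m D -> char_poly M = char_poly D.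
Proof.
case: m / e in M P Q * => QP MP.
have [_ P_unit] := mulmx1_unit QP.
pose Pc := map_mx polyC P.
have char_mxP : char_poly_mx M *m Pc = Pc *m char_poly_mx D.
  rewrite /char_poly_mx mulmxBl mulmxBr mul_scalar_mx mul_mx_scalar.
  by rewrite -!map_mxM MP.
have := congr1 determinant char_mxP; rewrite !det_mulmx mulrC; apply: mulfI.
by rewrite det_map_mx polyC_eq0 -unitfE -unitmxE.
Qed.

Lemma char_poly_block_diag n1 n2 (A : 'M[F]_n1) (B : 'M[F]_n2) :
  char_poly (block_mx A 0 0 B) = char_poly A * char_poly B.
Proof.
rewrite /char_poly /char_poly_mx map_block_mx scalar_mx_block opp_block_mx.
by rewrite add_block_mx !map_mx0 !subr0 det_ublock.
Qed.

Lemma char_polyZ n (a : F) (A : 'M[F]_n) (l : seq F) :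
  char_poly A = \prod_(z <- l) ('X - z%:P) ->
  char_poly (a *: A) = \prod_(z <- l) ('X - (a * z)%:P).
Proof.
move=> charA.
have size_l : size l = n.
  by have := size_char_poly A; rewrite charA size_prod_XsubC => -[].
have [->|a0] := eqVneq a 0.
  under eq_bigr do rewrite mul0r subr0.
  rewrite scale0r big_const_seq count_predT iter_mulr mulr1 size_l.
  by rewrite /char_poly /char_poly_mx map_mx0 subr0 det_scalar.
(* char_poly (a A) (X) = a^n char_poly A (X / a) *)
pose q : {poly F} := a^-1 *: 'X.
have XsubCZ (z : F) : 'X - (a * z)%:P = a%:P * (('X - z%:P) \Po q).
  by rewrite comp_polyB comp_polyX comp_polyC mulrBr mul_polyC scalerA mulfV
             // scale1r polyCM.
have char_mxZ :
    char_poly_mx (a *: A) = a%:P *: map_mx (comp_poly q) (char_poly_mx A).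
  apply/matrixP => i j; rewrite !mxE; case: eqP => _ /=.
    by rewrite mulr1n -XsubCZ.
  by rewrite comp_polyB comp_poly0 comp_polyC !sub0r mulrN -polyCM.
rewrite /char_poly char_mxZ detZ det_map_mx -/(char_poly A) charA rmorph_prod.
rewrite -size_l -[a%:P ^+ _]mulr1 -iter_mulr -count_predT -big_const_seq.
by rewrite -big_split; apply: eq_bigr => z _; rewrite XsubCZ.
Qed.

End CharPoly.

Section BlockMx2.
Variables (R : numFieldType) (n : nat) (S C : 'M[R]_n) (g : R).

Lemma block_mx2_kron_idcol_sym :
  block_mx2 S C g *m kron_idcol n 1 1 = kron_idcol n 1 1 *m S.
Proof.
apply/matrixP => r j; rewrite mulmx_kron_idcol kron_idcol_mul !mxE.
rewrite !block_idx_ord !block_ord_mod2 /=.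
by rewrite modn2; case: (odd r); rewrite /= !mulr1 mul1r; field.
Qed.

Lemma block_mx2_kron_idcol_skew :
  block_mx2 S C g *m kron_idcol n 1 (-1) = kron_idcol n 1 (-1) *m (g *: C).
Proof.
apply/matrixP => r j; rewrite mulmx_kron_idcol kron_idcol_mul !mxE.
rewrite !block_idx_ord !block_ord_mod2 /=.
rewrite modn2; case: (odd r);
  by rewrite /= ?mul1r ?mulr1 ?mulN1r ?mulrN1; field.
Qed.

Lemma char_poly_block_mx2 :
  char_poly (block_mx2 S C g) = char_poly S * char_poly (g *: C).
Proof.
pose P := row_mx (kron_idcol n 1 1) (kron_idcol n 1 (-1 : R)).
pose Q := (2%:R : R)^-1 *: P^T.
have nn2 : (n + n = n * 2)%N by rewrite addnn muln2.
rewrite -char_poly_block_diag; apply: (char_poly_similar nn2 (P := P) (Q := Q)).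
- rewrite /Q -scalemxAl tr_row_mx mul_col_row !tr_kron_idcol_mul.
  rewrite !mulr1 mulrN1 subrr mulrNN mulr1 !raddf0 -scalar_mx_block.
  by rewrite scale_scalar_mx mulVf ?pnatr_eq0.
- rewrite mul_mx_row mul_row_block !mulmx0 addr0 add0r.
  by rewrite block_mx2_kron_idcol_sym block_mx2_kron_idcol_skew.
Qed.

End BlockMx2.

Local Open Scope complex_scope.

Lemma realizes_block_mx2 (R : rcfType) n (S C : 'M[R]_n) (lam mu : seq R[i])
    (g : R) :
  realizes S lam -> realizes C mu ->
  realizes (block_mx2 S C g) (lam ++ [seq g%:C * z | z <- mu]).
Proof.
rewrite /realizes => charS charC.
rewrite -map_char_poly char_poly_block_mx2 rmorphM /= !map_char_poly map_mxZ.
by rewrite charS (char_polyZ _ charC) big_cat big_map.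
Qed.

Section Nonneg.
Variables (R : realFieldType) (n : nat) (S C : 'M[R]_n).
Hypothesis C_le_S : forall i j, `|C i j| <= S i j.

Lemma add_mul_ge0 g i j : `|g| <= 1 -> 0 <= S i j + g * C i j.
Proof.
move=> g_le1; have : `|g * C i j| <= S i j.
  by rewrite normrM (le_trans _ (C_le_S i j)) // ler_piMl.
by rewrite ler_norml => /andP[]; lra.
Qed.

Lemma nonneg_half_addZ g : `|g| <= 1 -> nonneg_mx (2%:R^-1 *: (S + g *: C)).
Proof. by move=> g_le1 i j; rewrite !mxE mulr_ge0 ?invr_ge0 ?add_mul_ge0. Qed.

Lemma nonneg_block_mx2 g : `|g| <= 1 -> nonneg_mx (block_mx2 S C g).
Proof.
move=> g_le1 r c; rewrite mxE.
case: ifP => _; rewrite divr_ge0 ?ler0n // -?mulNr add_mul_ge0 ?normrN //.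
Qed.

End Nonneg.

Theorem theorem3 (R : realType) (n : nat) (S C : 'M[R]_n)
    (lam mu : seq R[i]) (gamma : R) :
  0 <= gamma <= 1 ->
  (forall i j, `|C i j| <= S i j) ->
  realizes S lam -> realizes C mu ->
  nonneg_mx ((2%:R)^-1 *: (S + gamma *: C)) /\
  nonneg_mx ((2%:R)^-1 *: (S - gamma *: C)) /\
  nonneg_mx (block_mx2 S C gamma) /\
  nonneg_mx (block_mx2 S C (- gamma)) /\
  realizes (block_mx2 S C gamma) (lam ++ [seq gamma%:C * z | z <- mu]) /\
  realizes (block_mx2 S C (- gamma)) (lam ++ [seq - (gamma%:C * z) | z <- mu]).
Proof.
move=> /andP[gamma_ge0 gamma_le1] C_le_S charS charC.
have normg_le1 : `|gamma| <= 1 by rewrite ger0_norm.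
have normNg_le1 : `|- gamma| <= 1 by rewrite normrN.
have -> : S - gamma *: C = S + (- gamma) *: C by rewrite scaleNr.
have -> : [seq - (gamma%:C * z) | z <- mu] = [seq (- gamma)%:C * z | z <- mu].
  by apply: eq_map => z; rewrite rmorphN mulNr.
split; [|split; [|split; [|split; [|split]]]].
- exact: nonneg_half_addZ.
- exact: nonneg_half_addZ.
- exact: nonneg_block_mx2.
- exact: nonneg_block_mx2.
- exact: realizes_block_mx2.
- exact: realizes_block_mx2.
Qed.
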